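(* Let $G$ be a directed graph with real edge weights and no cycle of negative or zero weight. For any vertices $v,w$ such that $w$ is reachable from $v$, there exist two shortest paths from $v$ to $w$ in $G$ whose common vertices are all $(v,w)$-distance-critical vertices.
   Context: $\mathrm{dist}(x,y,H)$ denotes the shortest-path distance from $x$ to $y$ in graph $H$. A vertex $u$ is $(v,w)$-distance-critical if $u\in\{v,w\}$ or $\mathrm{dist}(v,w,G\setminus\{u\})>\mathrm{dist}(v,w,G)$. *)

From HB Require Import structures.
From mathcomp Require Import all_boot all_order all_algebra.
From mathcomp Require Import reals.
Set Implicit Arguments. Unset Strict Implicit. Unset Printing Implicit Defensive.
Import Order.TTheory GRing.Theory Num.Theory.
Local Open Scope ring_scope.

Section Graphs.
Variables (R : realType) (V : finType).

Definition pweight (wt : V -> V -> R) (v : V) (s : seq V) : R :=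
  \sum_(e <- zip (v :: s) s) wt e.1 e.2.

Definition gpath (E : rel V) (v : V) (s : seq V) (w : V) : bool :=
  [&& path E v s, last v s == w & uniq (v :: s)].

Definition gcycle (E : rel V) (x : V) (s : seq V) : bool :=
  [&& s != [::], path E x s, last x s == x & uniq s].

Definition del_vertex (E : rel V) (u : V) : rel V :=
  fun x y => [&& E x y, x != u & y != u].

Definition reachable (E : rel V) (v w : V) : Prop := exists s, gpath E v s w.

Definition shortest_path (E : rel V) (wt : V -> V -> R) (v : V) (s : seq V) (w : V)
  : Prop :=
  gpath E v s w /\
  forall s', gpath E v s' w -> pweight wt v s <= pweight wt v s'.

(* dist(v,w,H) is the infimum (in R ∪ {+oo}, inf of the empty set = +oo) of the
   weights of the v-w paths in H.  "dist(v,w,G\{u}) > dist(v,w,G)" unfolds to: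
   there is a real e with  dist(v,w,G) < e <= dist(v,w,G\{u}), i.e. some v-w path
   of G has weight < e, and every v-w path of G\{u} has weight >= e. *)
Definition dist_increases (E : rel V) (wt : V -> V -> R) (v w u : V) : Prop :=
  exists e : R,
    (exists s, gpath E v s w /\ pweight wt v s < e) /\
    (forall s, gpath (del_vertex E u) v s w -> e <= pweight wt v s).

Definition distance_critical (E : rel V) (wt : V -> V -> R) (v w u : V) : Prop :=
  u = v \/ u = w \/ dist_increases E wt v w u.

End Graphs.

From HB Require Import structures.
From mathcomp Require Import all_boot all_order all_algebra.
From mathcomp Require Import reals lra zify.
From Stdlib Require Import Classical.
Set Implicit Arguments. Unset Strict Implicit. Unset Printing Implicit Defensive.
Import Order.TTheory GRing.Theory Num.Theory.
Local Open Scope ring_scope.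

(* Among all pairs of shortest v-w paths pick one with the fewest common
   vertices, and suppose a common vertex x is not distance-critical.  Then some
   shortest v-w path q avoids x.  It starts at v, which precedes x on both
   paths, and ends at w, which does not; so q contains a segment from a vertex a
   before x on one path P, through vertices lying on neither path, to a vertex b
   after x on one of them.  Rerouting P from a to b along this segment (after
   exchanging the tails of the two paths at x when b lies on the other one)
   gives a new pair of shortest paths: since every cycle has positive weight, a
   v-w walk of minimal weight is a simple path.  The vertex x is no longer
   common and no new common vertex appears, contradicting minimality. *)

Lemma uniq_cat_notin (T : eqType) (s1 s2 : seq T) (y : T) :
  uniq (s1 ++ s2) -> y \in s1 -> y \notin s2.
Proof. by rewrite cat_uniq => /and3P[_ /hasPn s2N1 _]; apply: contraL => /s2N1. Qed.

Lemma uniq_last_cat_prefix (T : eqType) (x : T) (p q : seq T) :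
  uniq (x :: p ++ q) -> last x (p ++ q) \in x :: p -> last x (p ++ q) = last x p.
Proof.
rewrite last_cat -cat_cons; case: q => [//|z q] U Hp.
by have := uniq_cat_notin U Hp; rewrite /= mem_last.
Qed.

Lemma split_detour (T : eqType) (A C : pred T) (a0 : T) (s : seq T) :
  A a0 -> C (last a0 s) -> ~~ A (last a0 s) ->
  exists t1 m b t3, [/\ s = t1 ++ m ++ b :: t3, A (last a0 t1), all (predC C) m,
                       C b & ~~ A b].
Proof.
elim: s a0 => [|y s IH] a0 Aa0 Cl nAl; first by rewrite /= Aa0 in nAl.
have [Ay | nAy] := boolP (A y).
  have [t1 [m [b [t3 [-> At1 Cm Cb nAb]]]]] := IH y Ay Cl nAl.
  by exists (y :: t1), m, b, t3.
have [Cy | nCy] := boolP (C y); first by exists [::], [::], y, s.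
case: s IH Cl nAl => [|z s] IH Cl nAl; first by rewrite /= (negbTE nCy) in Cl.
have [[|u t1] [m [b [t3 [Es At1 Cm Cb nAb]]]]] := IH a0 Aa0 Cl nAl.
  by exists [::], (y :: m), b, t3; rewrite Es /= nCy.
by exists (y :: u :: t1), m, b, t3; rewrite Es.
Qed.

Lemma setI_proper_setD1 (T : finType) (A A' B M : {set T}) (x : T) :
  x \in A -> x \in B -> [disjoint M & B] -> A' \subset A :\ x :|: M ->
  A' :&: B \proper A :&: B.
Proof.
move=> xA xB dMB sA'; apply/properP; split.
  apply/subsetP => y /setIP[yA' yB]; rewrite inE yB andbT.
  have /setUP[/setD1P[_ //] | yM] := subsetP sA' y yA'.
  by rewrite (disjointFr dMB yM) in yB.
exists x; first by rewrite inE xA xB.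
rewrite inE xB andbT; apply/negP => /(subsetP sA') /setUP[|xM].
  by rewrite setD11.
by rewrite (disjointFr dMB xM) in xB.
Qed.

Section ShortestPaths.
Variables (R : realType) (V : finType) (E : rel V) (wt : V -> V -> R).

Lemma pweight_nil (x : V) : pweight wt x [::] = 0.
Proof. by rewrite /pweight big_nil. Qed.

Lemma pweight_cons (x y : V) (s : seq V) : pweight wt x (y :: s) = wt x y + pweight wt y s.
Proof. by rewrite /pweight big_cons. Qed.

Lemma pweight_cat (x : V) (s t : seq V) :
  pweight wt x (s ++ t) = pweight wt x s + pweight wt (last x s) t.
Proof.
elim: s x => [|y s IH] x /=; first by rewrite pweight_nil add0r.
by rewrite !pweight_cons IH addrA.
Qed.

Lemma not_uniq_loop (x : V) (s : seq V) : ~~ uniq (x :: s) ->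
  exists t1 c t2 : seq V, [/\ s = t1 ++ c ++ t2, c != [::] & last (last x t1) c = last x t1].
Proof.
elim: s x => [//|y s IH] x; rewrite cons_uniq negb_and negbK => /orP[xs | /IH].
  case/splitPr: xs => p1 p2; exists [::], (rcons p1 x), p2.
  by rewrite cat_rcons last_rcons; case: p1.
by move=> [t1 [c [t2 [-> nc lc]]]]; exists (y :: t1), c, t2.
Qed.

Hypothesis wt_cycle_gt0 : forall (x : V) (s : seq V), gcycle E x s -> 0 < pweight wt x s.

Lemma closed_walk_weight_gt0 (x : V) (s : seq V) :
  s != [::] -> path E x s -> last x s = x -> 0 < pweight wt x s.
Proof.
have [n] := ubnP (size s); elim: n x s => // n IH x s Hn ns Hp Hl.
case Us: (uniq s); first by apply: wt_cycle_gt0; rewrite /gcycle ns Hp Hl eqxx Us.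
case: s Hn ns Hp Hl Us => [//|y s] /= Hn _ /andP[Exy Hp] Hl Us.
have [t1 [c [t2 [Es nc lc]]]] := not_uniq_loop (negbT Us).
have c_gt0 : (0 < size c)%N by case: (c) nc.
set z := last y t1 in lc; subst s.
move: Hp Hl Hn; rewrite !cat_path !last_cat lc -/z !size_cat => /and3P[Hp1 Hpc Hp2] Hl Hn.
have Hc : 0 < pweight wt z c by apply: IH => //; lia.
have Ho : 0 < pweight wt x (y :: t1 ++ t2).
  apply: IH => //=; last by rewrite last_cat.
  - by rewrite size_cat; lia.
  - by rewrite Exy cat_path Hp1.
move: Ho; rewrite !pweight_cons !pweight_cat lc -/z; lra.
Qed.

Lemma walk_to_gpath (x : V) (s : seq V) : path E x s ->
  exists s', [/\ gpath E x s' (last x s), pweight wt x s' <= pweight wt x s &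
    (~~ uniq (x :: s) -> pweight wt x s' < pweight wt x s)].
Proof.
have [n] := ubnP (size s); elim: n s => // n IH s Hn Hp.
case Us: (uniq (x :: s)); first by exists s; rewrite /gpath Hp eqxx Us.
have [t1 [c [t2 [Es nc lc]]]] := not_uniq_loop (negbT Us); subst s.
move: Hp; rewrite !cat_path lc => /and3P[Hp1 Hpc Hp2].
have Hc := closed_walk_weight_gt0 nc Hpc lc.
have c_gt0 : (0 < size c)%N by case: (c) nc.
have Hp' : path E x (t1 ++ t2) by rewrite cat_path Hp1.
have Hn' : (size (t1 ++ t2) < n)%N by move: Hn; rewrite !size_cat; lia.
have [s' [Hg Hle _]] := IH _ Hn' Hp'.
exists s'; rewrite !last_cat lc -last_cat in Hg *; split => //;
  by move: Hle; rewrite !pweight_cat lc; lra.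
Qed.

Fixpoint seqs_upto (n : nat) : seq (seq V) :=
  [::] :: if n is n'.+1 then [seq x :: s | x <- enum V, s <- seqs_upto n'] else [::].

Lemma mem_seqs_upto (n : nat) (s : seq V) : (size s <= n)%N -> s \in seqs_upto n.
Proof.
elim: n s => [|n IH] [|x s] //= Hs; rewrite in_cons; apply/orP; right.
by apply/allpairsP; exists (x, s); rewrite mem_enum IH.
Qed.

Lemma gpath_size (E' : rel V) (x y : V) (s : seq V) : gpath E' x s y -> (size s < #|V|)%N.
Proof. by case/and3P=> _ _ /card_uniqP /= <-; exact: max_card. Qed.

Lemma exists_min_gpath (E' : rel V) (x y : V) : (exists s, gpath E' x s y) ->
  exists s, gpath E' x s y /\ forall t, gpath E' x t y -> pweight wt x s <= pweight wt x t.
Proof.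
move=> [s0 Hs0].
have memS t : gpath E' x t y -> t \in seqs_upto #|V|.
  by move/gpath_size/ltnW; exact: mem_seqs_upto.
pose P := [pred t : seq_sub (seqs_upto #|V|) | gpath E' x (val t) y].
have P0 : P (SeqSub (memS _ Hs0)) by [].
case: (arg_minP (fun t => pweight wt x (val t)) P0) => t Pt tmin.
by exists (val t); split=> // u Pu; exact: (tmin (SeqSub (memS _ Pu))).
Qed.

Variables (v w : V).

Lemma shortest_path_uniq (s : seq V) : shortest_path E wt v s w -> uniq (v :: s).
Proof. by case=> /and3P[]. Qed.

Lemma shortest_path_last (s : seq V) : shortest_path E wt v s w -> last v s = w.
Proof. by case=> /and3P[_ /eqP]. Qed.

Lemma shortest_path_le_walk (s0 s : seq V) : shortest_path E wt v s0 w ->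
  path E v s -> last v s = w -> pweight wt v s0 <= pweight wt v s.
Proof.
move=> [_ s0min] Hp Hl; have [s' [Hg Hle _]] := walk_to_gpath Hp.
by rewrite Hl in Hg; exact: le_trans (s0min _ Hg) Hle.
Qed.

Lemma walk_shortest_path (s0 s : seq V) : shortest_path E wt v s0 w ->
  path E v s -> last v s = w -> pweight wt v s <= pweight wt v s0 ->
  shortest_path E wt v s w.
Proof.
move=> [_ s0min] Hp Hl Hle; have [s' [Hg _ Hlt]] := walk_to_gpath Hp.
rewrite Hl in Hg; have s0s' := s0min _ Hg.
have Us : uniq (v :: s) by apply/negPn/negP => /Hlt; lra.
split=> [|t Ht]; first by rewrite /gpath Hp Hl eqxx Us.
exact: le_trans Hle (s0min _ Ht).
Qed.

Lemma shortest_path_splice (a b a' b' : seq V) :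
  shortest_path E wt v (a ++ b) w -> shortest_path E wt v (a' ++ b') w ->
  last v a = last v a' -> shortest_path E wt v (a ++ b') w.
Proof.
move=> H H' la.
have /and3P[P /eqP L _] := proj1 H; have /and3P[P' /eqP L' _] := proj1 H'.
move: P P' L L'; rewrite !cat_path !last_cat -la => /andP[Pa Pb] /andP[Pa' Pb'] Lb Lb'.
have Pab' : path E v (a ++ b') by rewrite cat_path Pa.
have Pa'b : path E v (a' ++ b) by rewrite cat_path Pa' -la.
have le_a : pweight wt v (a ++ b) <= pweight wt v (a' ++ b).
  by apply: shortest_path_le_walk H Pa'b _; rewrite last_cat -la.
have eq1 := proj2 H _ (proj1 H'); have eq2 := proj2 H' _ (proj1 H).
apply: (walk_shortest_path H Pab'); first by rewrite last_cat.
by move: le_a eq1 eq2; rewrite !pweight_cat -la; lra.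
Qed.

Definition vset (s : seq V) : {set V} := [set y in v :: s].

Lemma in_vset (y : V) (s : seq V) : (y \in vset s) = (y \in v :: s).
Proof. by rewrite in_set. Qed.

Lemma shortest_path_tail_swap (p1 q1 p2 q2 : seq V) :
  shortest_path E wt v (p1 ++ q1) w -> shortest_path E wt v (p2 ++ q2) w ->
  last v p1 = last v p2 ->
  [/\ shortest_path E wt v (p1 ++ q2) w, shortest_path E wt v (p2 ++ q1) w &
      vset (p1 ++ q2) :&: vset (p2 ++ q1) \subset vset (p1 ++ q1) :&: vset (p2 ++ q2)].
Proof.
move=> H1 H2 l12; split; first exact: shortest_path_splice H1 H2 l12.
  exact: shortest_path_splice H2 H1 (esym l12).
have U1 := shortest_path_uniq H1; have U2 := shortest_path_uniq H2.
rewrite -cat_cons in U1; rewrite -cat_cons in U2.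
apply/subsetP => y; rewrite !in_setI !in_vset -!cat_cons !mem_cat.
case/andP => /orP[y1 | y2] /orP[y2' | y1']; rewrite ?y1 ?y2 ?y1' ?y2' ?orbT //.
- by rewrite (negbTE (uniq_cat_notin U1 y1)) in y1'.
- by rewrite (negbTE (uniq_cat_notin U2 y2')) in y2.
Qed.

Lemma shortest_path_detour (p1 q1 t1 m : seq V) (b : V) (t3 : seq V) :
  shortest_path E wt v (p1 ++ q1) w -> shortest_path E wt v (t1 ++ m ++ b :: t3) w ->
  last v t1 \in v :: p1 -> last v t1 != last v p1 -> b \in q1 ->
  exists2 s, shortest_path E wt v s w &
    vset s \subset vset (p1 ++ q1) :\ last v p1 :|: [set y in m].
Proof.
move=> H1 HQ Ha + bq1; move: H1; case/splitPl: Ha => p1a p1b la.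
case/splitPr: bq1 => q1a q1b H1; set x := last v (p1a ++ p1b) => ax.
have x_p1b : x \in p1b.
  by move: (mem_last (last v p1a) p1b); rewrite -last_cat in_cons la eq_sym (negbTE ax).
have x_notin : x \notin (v :: p1a) ++ q1a ++ b :: q1b.
  have := shortest_path_uniq H1; rewrite -catA -cat_cons uniq_catCA.
  by move/uniq_cat_notin; apply.
have HR : shortest_path E wt v ((p1a ++ rcons m b) ++ t3) w.
  by rewrite -catA cat_rcons; rewrite -catA in H1; apply: shortest_path_splice H1 HQ la.
have H1' : shortest_path E wt v (((p1a ++ p1b) ++ rcons q1a b) ++ q1b) w.
  by rewrite -catA cat_rcons.
have HS : shortest_path E wt v ((p1a ++ rcons m b) ++ q1b) w.
  by apply: shortest_path_splice HR H1' _; rewrite !last_cat !last_rcons.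
exists ((p1a ++ rcons m b) ++ q1b) => //.
have sub : {subset v :: (p1a ++ rcons m b) ++ q1b <= ((v :: p1a) ++ q1a ++ b :: q1b) ++ m}.
  move=> y; rewrite -cats1 -!catA -cat_cons !mem_cat mem_seq1 (in_cons b).
  by case/or4P=> ->; rewrite ?orbT.
apply/subsetP => y; rewrite in_vset => /sub; rewrite mem_cat => /orP[y_old | y_m].
  rewrite in_setU in_setD1 in_vset; apply/orP; left; apply/andP; split.
    by apply: contraNneq x_notin => <-.
  by move: y_old; rewrite -!cat_cons !mem_cat => /or3P[] ->; rewrite ?orbT.
by rewrite in_setU in_set y_m orbT.
Qed.

Lemma shortest_path_last_in_prefix (p q : seq V) :
  shortest_path E wt v (p ++ q) w -> w \in v :: p -> w = last v p.
Proof.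
move=> H; have <- := shortest_path_last H.
exact: uniq_last_cat_prefix (shortest_path_uniq H).
Qed.

Lemma shortest_path_exchange (p1 q1 p2 q2 t1 m : seq V) (b : V) (t3 : seq V) :
  shortest_path E wt v (p1 ++ q1) w -> shortest_path E wt v (p2 ++ q2) w ->
  last v p1 = last v p2 -> shortest_path E wt v (t1 ++ m ++ b :: t3) w ->
  (last v t1 \in v :: p1) || (last v t1 \in v :: p2) -> last v t1 != last v p1 ->
  (b \in q1) || (b \in q2) ->
  [disjoint [set y in m] & vset (p1 ++ q1) :|: vset (p2 ++ q2)] ->
  exists s1 s2, [/\ shortest_path E wt v s1 w, shortest_path E wt v s2 w &
    vset s1 :&: vset s2 \proper vset (p1 ++ q1) :&: vset (p2 ++ q2)].
Proof.
move=> H1 H2 l12 HQ Ha ax Hb dm.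
wlog {Ha} Ha : p1 q1 p2 q2 H1 H2 l12 ax Hb dm / last v t1 \in v :: p1.
  move=> base; case/orP: Ha => Ha; first exact: base.
  have := base p2 q2 p1 q1 H2 H1 (esym l12); rewrite -l12 orbC setUC.
  case/(_ ax Hb dm Ha) => s1 [s2 [S1 S2 lt]].
  by exists s2, s1; rewrite setIC (setIC (vset (p1 ++ q1))).
wlog {Hb} Hb : q1 q2 H1 H2 dm / b \in q1.
  move=> base; case/orP: Hb => Hb; first exact: base.
  have [S1 S2 sub] := shortest_path_tail_swap H1 H2 l12.
  have dm' : [disjoint [set y in m] & vset (p1 ++ q2) :|: vset (p2 ++ q1)].
    apply: disjointWr dm; apply/subsetP => y.
    rewrite !in_setU !in_vset -!cat_cons !mem_cat.
    by case/orP=> /orP[] ->; rewrite ?orbT.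
  have [s1 [s2 [S1' S2' lt]]] := base q2 q1 S1 S2 dm' Hb.
  by exists s1, s2; split=> //; exact: proper_sub_trans lt sub.
have [s S ssub] := shortest_path_detour H1 HQ Ha ax Hb.
exists s, (p2 ++ q2); split=> //; apply: (setI_proper_setD1 _ _ _ ssub).
- by rewrite in_vset -cat_cons mem_cat mem_last.
- by rewrite in_vset l12 -cat_cons mem_cat mem_last.
- by apply: disjointWr dm; exact: subsetUr.
Qed.

Lemma del_vertex_gpath (u a b : V) (s : seq V) :
  gpath (del_vertex E u) a s b -> gpath E a s b /\ u \notin s.
Proof.
case/and3P=> Hp Hl Hu; split.
  by rewrite /gpath Hl Hu (sub_path _ Hp) // => y z /and3P[].
elim: s a Hp {Hl Hu} => //= y s IH a /andP[/and3P[_ _ yu] /IH us].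
by rewrite in_cons negb_or eq_sym yu.
Qed.

Lemma shortest_path_avoiding (s : seq V) (x : V) :
  shortest_path E wt v s w -> ~ dist_increases E wt v w x ->
  exists2 q, shortest_path E wt v q w & x \notin q.
Proof.
move=> Hs nd.
have [[q0 Hq0] | nreach] := classic (exists q, gpath (del_vertex E x) v q w); last first.
  case: nd; exists (pweight wt v s + 1); split.
    by exists s; split; [case: Hs | lra].
  by move=> q Hq; case: nreach; exists q.
have [q [Hq qmin]] := exists_min_gpath (ex_intro _ q0 Hq0).
have [gq xq] := del_vertex_gpath Hq.
exists q => //; have [le_qs | lt_sq] := leP (pweight wt v q) (pweight wt v s).
  by split=> // t Ht; exact: le_trans le_qs (proj2 Hs t Ht).
case: nd; exists (pweight wt v q); split; last exact: qmin.
by exists s; split; first case: Hs.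
Qed.

Lemma shrink_common_noncritical (s1 s2 : seq V) (x : V) :
  shortest_path E wt v s1 w -> shortest_path E wt v s2 w ->
  x \in v :: s1 -> x \in v :: s2 -> x != v -> ~ dist_increases E wt v w x ->
  exists s1' s2', [/\ shortest_path E wt v s1' w, shortest_path E wt v s2' w &
    vset s1' :&: vset s2' \proper vset s1 :&: vset s2].
Proof.
move=> H1 H2 xs1 xs2 xv nd.
have [q HQ xq] := shortest_path_avoiding H1 nd.
have {}xq : x \notin v :: q by rewrite in_cons negb_or xv.
case/splitPl: xs1 H1 => p1 q1 l1 H1; case/splitPl: xs2 H2 => p2 q2 l2 H2.
have xw : w != x by apply: contraNneq xq => <-; rewrite -(shortest_path_last HQ) mem_last.
have wp1 : w \notin v :: p1.
  by apply: contra xw => /(shortest_path_last_in_prefix H1) ->; rewrite l1.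
have wp2 : w \notin v :: p2.
  by apply: contra xw => /(shortest_path_last_in_prefix H2) ->; rewrite l2.
pose A := [pred y | ((y \in v :: p1) || (y \in v :: p2)) && (y != x)].
pose C := [pred y | y \in vset (p1 ++ q1) :|: vset (p2 ++ q2)].
have Av : A v by rewrite /= mem_head eq_sym xv.
have Cw : C (last v q).
  by rewrite /= (shortest_path_last HQ) in_setU in_vset -{1}(shortest_path_last H1) mem_last.
have nAw : ~~ A (last v q).
  by rewrite /= (shortest_path_last HQ) (negbTE wp1) (negbTE wp2).
have [t1 [m [b [t3 [Eq /andP[Ha ax] Cm Cb nAb]]]]] := split_detour Av Cw nAw.
subst q; have bx : b != x.
  by apply: contraNneq xq => <-; rewrite -cat_cons !mem_cat mem_head !orbT.
have Hb : (b \in q1) || (b \in q2).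
  move: Cb nAb; rewrite /= bx andbT in_setU !in_vset -!cat_cons !mem_cat.
  by case: (b \in v :: p1); case: (b \in v :: p2).
apply: (shortest_path_exchange H1 H2 _ HQ Ha _ Hb); first by rewrite l1 l2.
  by rewrite l1.
rewrite disjoint_subset; apply/subsetP => y; rewrite in_set => /(allP Cm).
by rewrite inE.
Qed.

Lemma exists_shortest_pair_critical (s1 s2 : seq V) :
  shortest_path E wt v s1 w -> shortest_path E wt v s2 w ->
  exists s1' s2', [/\ shortest_path E wt v s1' w, shortest_path E wt v s2' w &
    forall x : V, x \in v :: s1' -> x \in v :: s2' -> distance_critical E wt v w x].
Proof.
have [n] := ubnP #|vset s1 :&: vset s2|; elim: n s1 s2 => // n IH s1 s2 lt_n H1 H2.
have [[s1' [s2' [H1' H2' lt]]] | nobetter] := classic (exists s1' s2',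
  [/\ shortest_path E wt v s1' w, shortest_path E wt v s2' w &
      vset s1' :&: vset s2' \proper vset s1 :&: vset s2]).
  by apply: (IH s1' s2') => //; apply: leq_trans (proper_card lt) _; rewrite -ltnS.
exists s1, s2; split=> // x xs1 xs2; apply: NNPP => ncrit; apply: nobetter.
apply: (shrink_common_noncritical H1 H2 xs1 xs2).
  by apply/eqP => xv; apply: ncrit; left.
by move=> inc; apply: ncrit; right; right.
Qed.

End ShortestPaths.

Theorem mainTheorem7 (R : realType) (V : finType) (E : rel V) (wt : V -> V -> R)
  (hcyc : forall (x : V) (s : seq V), gcycle E x s -> 0 < pweight wt x s)
  (v w : V) (hreach : reachable E v w) :
  exists s1 s2 : seq V,
    [/\ shortest_path E wt v s1 w, shortest_path E wt v s2 w &
        forall x : V, x \in v :: s1 -> x \in v :: s2 ->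
          distance_critical E wt v w x].
Proof.
have [s [Hs smin]] := exists_min_gpath wt hreach.
have Hsp : shortest_path E wt v s w by split.
exact: (exists_shortest_pair_critical hcyc Hsp Hsp).
Qed.
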